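(* For every integer $k\ge0$ the formal power series $\psi_k(x):=-x^{2k}-\sum_{i\ge k}{i\brack k}x^{2i+1}$ is symplectic, and for $k\ge1$ it equals $\frac{1}{(2k-1)!}\sum_{i\ge1}(-1)^{i-1}E_{i-1}^{(2k-1)}(0)\,x^i$, where $E^{(2k-1)}$ denotes the $(2k-1)$-st derivative.
   Context: A formal power series $\varphi(x)=\sum_{i\ge0}\gamma_i x^i$ is called symplectic if for every $m\ge1$ one has $\sum_{k=0}^{m-1}(-1)^k\binom{m-1}{k}\gamma_{m+k}=0$. The Euler polynomials $E_n(x)$ are defined by $\frac{2e^{xt}}{e^t+1}=\sum_{n\ge0}E_n(x)\frac{t^n}{n!}$. For $n\ge0$ the integers ${n\brack i}$ are defined by $x\big(x^{2n}-E_{2n}(x)\big)=\sum_i {n\brack i}x^{2i}$; thus ${n\brack i}=0$ for $i\le0$ or $i>n$. *)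

From mathcomp Require Import all_boot all_order all_algebra.
Set Implicit Arguments. Unset Strict Implicit. Unset Printing Implicit Defensive.
Import Order.TTheory GRing.Theory Num.Theory.
Local Open Scope ring_scope.

Definition fps := nat -> rat.

Definition symplectic (g : fps) : Prop :=
  forall m : nat, (1 <= m)%N ->
    \sum_(k < m) (-1) ^+ k * ('C(m.-1, k))%:R * g (m + k)%N = 0.

(* The generating function identity
   2 e^{xt} / (e^t + 1) = sum_n E_n(x) t^n/n!,  i.e.  (e^t + 1) * E(x,t) = 2 e^{xt},
   is, coefficientwise in t^n/n!,
     E_n(x) + sum_{k=0}^n C(n,k) E_k(x) = 2 x^n,
   i.e.  E_n(x) = x^n - 1/2 * sum_{k<n} C(n,k) E_k(x).
   euler_seq n = [:: E_0; ...; E_n]. *)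
Fixpoint euler_seq (n : nat) : seq {poly rat} :=
  match n with
  | 0 => [:: 1]
  | n'.+1 =>
      let s := euler_seq n' in
      rcons s ('X^(n'.+1) - 2^-1 *: \sum_(k < n'.+1) ('C(n'.+1, k))%:R *: s`_k)
  end.

Definition euler_poly (n : nat) : {poly rat} := (euler_seq n)`_n.

Definition bracket (n i : nat) : rat :=
  ('X * ('X^(2 * n) - euler_poly (2 * n)))`_(2 * i).

Definition psi (k : nat) : fps := fun j =>
  - (if j == (2 * k)%N then 1 else 0)
  - (if odd j && (k <= j./2)%N then bracket j./2 k else 0).

Definition psi_euler (k : nat) : fps := fun j =>
  match j with
  | 0 => 0
  | i'.+1 => ((2 * k).-1`!)%:R^-1 * ((-1) ^+ i' * ((euler_poly i')^`((2 * k).-1)).[0])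
  end.

From HB Require Import structures.
From mathcomp Require Import all_boot all_order all_algebra ring.
Set Implicit Arguments. Unset Strict Implicit. Unset Printing Implicit Defensive.
Import GRing.Theory Num.Theory.
Local Open Scope ring_scope.

(* Let L be the linear map on Q[x] sending x^n to E_n(x).  The defining
   recurrence of the Euler polynomials says L(Q(x) + Q(x+1)) = 2 Q(x), and the
   sums Q(x) + Q(x+1) span Q[x] (induct on the degree, since Q(x+1) - Q(x) has
   lower degree); comparing both sides on such sums gives the reflection law
   L(Q)(-x) = L(Q(-x-1)).  Applied to Q = x^n with n odd it shows that the odd
   part of E_n is x^n; applied to Q = (x(x+1))^p, which is invariant under
   x -> -x-1, it shows that sum_j C(p,j) E_{p+j} is even.  For k >= 1 the
   coefficient of x^(i+1) in psi_k is (-1)^i times the coefficient of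
   x^(2k-1) in E_i, which is the second claim, and the symplectic sum of index
   p+1 becomes (-1)^p times the (odd) x^(2k-1) coefficient of
   sum_j C(p,j) E_{p+j}, which vanishes. *)

Lemma size_comp_XaddC_subr_lt (R : idomainType) (c : R) (Q : {poly R}) :
  Q != 0 -> (size (Q \Po ('X + c%:P) - Q)%R < size Q)%N.
Proof.
move=> Qn0; have sXc : size ('X + c%:P) = 2 by rewrite size_XaddC.
have sQc : size (Q \Po ('X + c%:P)) = size Q by rewrite size_comp_poly2.
have lQc : lead_coef (Q \Po ('X + c%:P)) = lead_coef Q.
  by rewrite lead_coef_comp ?sXc // lead_coefXaddC expr1n mulr1.
have Q_gt0 : (0 < size Q)%N by rewrite size_poly_gt0.
rewrite -(prednK Q_gt0) ltnS; apply/leq_sizeP => j; rewrite leq_eqVlt coefB.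
case/orP=> [/eqP <-|ltQj].
  by move: lQc; rewrite !lead_coefE sQc => ->; rewrite subrr.
by rewrite !nth_default ?subrr // ?sQc -(prednK Q_gt0).
Qed.

Lemma coef_comp_polyNX (R : comNzRingType) (p : {poly R}) i :
  (p \Po - 'X)`_i = (-1) ^+ i * p`_i.
Proof.
have NXn j : (- 'X) ^+ j = (-1) ^+ j *: 'X^j :> {poly R}.
  by rewrite -exprZn scaleN1r.
rewrite comp_polyE (eq_bigr (fun j : 'I__ => (p`_j * (-1) ^+ j) *: 'X^j)).
  rewrite -(poly_def (size p) (fun j => p`_j * (-1) ^+ j)) coef_poly mulrC.
  by case: ltnP => // /(nth_default 0) ->; rewrite mulr0.
by move=> j _; rewrite NXn scalerA.
Qed.

Section TwoInvertible.
Variable F : fieldType.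
Hypothesis two_neq0 : 2%:R != 0 :> F.

Lemma coef_odd_eq0 (p : {poly F}) i : p \Po - 'X = p -> odd i -> p`_i = 0.
Proof.
move=> p_even i_odd; have /eqP : p`_i *+ 2 = 0.
  by rewrite mulr2n -{1}p_even coef_comp_polyNX -signr_odd i_odd mulN1r addNr.
by rewrite -mulr_natr mulf_eq0 (negPf two_neq0) orbF => /eqP.
Qed.

Lemma mulr2n_eq0 (V : lmodType F) (v : V) : v *+ 2 = 0 -> v = 0.
Proof.
move=> v2; rewrite -[v]scale1r -(mulVf two_neq0) -scalerA scaler_nat v2.
exact: scaler0.
Qed.

Lemma shift_sums_kernel (V : lmodType F) (c : F) (f : {additive {poly F} -> V}) :
  (forall P, f (P + (P \Po ('X + c%:P))) = 0) -> forall Q, f Q = 0.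
Proof.
move=> f_shift Q; elim/ltn_ind: (size Q) {-2}Q (erefl (size Q)) => n IHn {}Q sQ.
have [->|Qn0] := eqVneq Q 0; first exact: raddf0.
have f_diff : f (Q \Po ('X + c%:P) - Q) = 0.
  by apply: (IHn _ _ _ erefl); rewrite -sQ size_comp_XaddC_subr_lt.
apply: mulr2n_eq0; rewrite -raddfMn.
have -> : Q *+ 2 = (Q + (Q \Po ('X + c%:P))) - (Q \Po ('X + c%:P) - Q).
  by rewrite mulr2n opprB addrCA addrK.
by rewrite raddfB f_shift f_diff subrr.
Qed.
End TwoInvertible.

Lemma size_euler_seq n : size (euler_seq n) = n.+1.
Proof. by elim: n => [|n IHn] //=; rewrite size_rcons IHn. Qed.

Lemma nth_euler_seq n k : (k <= n)%N -> (euler_seq n)`_k = euler_poly k.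
Proof.
elim: n => [|n IHn]; first by rewrite leqn0 => /eqP ->.
rewrite leq_eqVlt ltnS => /orP[/eqP -> //|le_kn].
by rewrite /= nth_rcons size_euler_seq ltnS le_kn IHn.
Qed.

Lemma euler_polyS n : euler_poly n.+1 =
  'X^(n.+1) - 2^-1 *: \sum_(k < n.+1) 'C(n.+1, k)%:R *: euler_poly k.
Proof.
rewrite /euler_poly /= nth_rcons size_euler_seq ltnn eqxx.
by congr (_ - _ *: _); apply: eq_bigr => k _; rewrite nth_euler_seq // -ltnS.
Qed.

Lemma euler_poly_rec n :
  euler_poly n + \sum_(k < n.+1) 'C(n, k)%:R *: euler_poly k = 2%:R *: 'X^n.
Proof.
case: n => [|n]; first by rewrite big_ord1 scale1r -mulr2n scaler_nat.
rewrite big_ord_recr /= binn scale1r addrCA -mulr2n -scaler_nat euler_polyS.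
by rewrite scalerBr scalerA mulfV // scale1r addrC subrK.
Qed.

Lemma coef_euler_poly_gt n j : (n < j)%N -> (euler_poly n)`_j = 0.
Proof.
elim/ltn_ind: n j => -[|n] IHn j lt_nj; first by rewrite coef1 gtn_eqF.
rewrite euler_polyS coefB coefXn gtn_eqF // coefZ coef_sum big1 ?mulr0 ?subr0 //.
by move=> i _; rewrite coefZ IHn ?mulr0 // (ltn_trans (ltn_ord i)).
Qed.

Definition euler_umbral (Q : {poly rat}) : {poly rat} :=
  \sum_(i < size Q) Q`_i *: euler_poly i.

Lemma euler_umbral_widen (Q : {poly rat}) n : (size Q <= n)%N ->
  euler_umbral Q = \sum_(i < n) Q`_i *: euler_poly i.
Proof.
move=> le_Qn; rewrite /euler_umbral.
rewrite (big_ord_widen n (fun i => Q`_i *: euler_poly i)) // big_mkcond.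
apply: eq_bigr => i _; case: ltnP => // le_Qi.
by rewrite nth_default // scale0r.
Qed.

Lemma euler_umbral_is_linear : linear euler_umbral.
Proof.
move=> a P Q; set n := maxn (size P) (size Q).
have le_aPQ : (size (a *: P + Q)%R <= n)%N.
  rewrite (leq_trans (size_polyD _ _)) // geq_max leq_maxr.
  by rewrite (leq_trans (size_scale_leq _ _)) ?leq_maxl.
rewrite !(@euler_umbral_widen _ n) ?leq_maxl ?leq_maxr //.
rewrite scaler_sumr -big_split; apply: eq_bigr => i _.
by rewrite coefD coefZ scalerDl scalerA.
Qed.

HB.instance Definition _ := GRing.isLinear.Build rat {poly rat} {poly rat} *:%R
  euler_umbral euler_umbral_is_linear.

Lemma euler_umbral_Xn n : euler_umbral 'X^n = euler_poly n.
Proof.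
rewrite /euler_umbral size_polyXn big_ord_recr /= coefXn eqxx scale1r.
by rewrite big1 ?add0r // => i _; rewrite coefXn ltn_eqF // scale0r.
Qed.

Lemma euler_umbral_XaddC1n n :
  euler_umbral (('X + 1) ^+ n) = 2%:R *: 'X^n - euler_poly n.
Proof.
rewrite -euler_poly_rec addrAC subrr add0r exprD1n linear_sum.
by apply: eq_bigr => i _; rewrite raddfMn /= euler_umbral_Xn scaler_nat.
Qed.

Lemma euler_umbral_shift (Q : {poly rat}) :
  euler_umbral (Q + (Q \Po ('X + 1))) = 2%:R *: Q.
Proof.
rewrite linearD /= comp_polyE linear_sum /= {1}/euler_umbral -big_split /=.
rewrite -[in RHS](coefK Q) poly_def scaler_sumr; apply: eq_bigr => i _.
by rewrite linearZ /= euler_umbral_XaddC1n scalerBr addrC subrK !scalerA mulrC.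
Qed.

Definition euler_reflect_defect (Q : {poly rat}) : {poly rat} :=
  euler_umbral Q \Po - 'X - euler_umbral (Q \Po (- 'X - 1)).

Lemma euler_reflect_defect_is_zmod_morphism : zmod_morphism euler_reflect_defect.
Proof. by move=> P Q; rewrite /euler_reflect_defect !linearB /=; ring. Qed.

HB.instance Definition _ := GRing.isZmodMorphism.Build {poly rat} {poly rat}
  euler_reflect_defect euler_reflect_defect_is_zmod_morphism.

(* Both sides equal [2 Q(-x)]: [x + 1] and [-x - 1] compose to [-x]. *)
Lemma euler_reflect_defect_shift (Q : {poly rat}) :
  euler_reflect_defect (Q + (Q \Po ('X + 1%:P))) = 0.
Proof.
have NX1 : ('X + 1) \Po (- 'X - 1) = - 'X :> {poly rat}.
  by rewrite comp_polyD comp_polyX comp_polyC subrK.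
have X1NX : - 'X \Po ('X + 1) = - 'X - 1 :> {poly rat}.
  by rewrite raddfN /= comp_polyX opprD.
rewrite /euler_reflect_defect polyC1 euler_umbral_shift comp_polyZ comp_polyD.
rewrite -comp_polyA NX1 -X1NX comp_polyA [_ + (Q \Po - 'X)]addrC.
by rewrite euler_umbral_shift subrr.
Qed.

Lemma euler_umbral_reflect (Q : {poly rat}) :
  euler_umbral Q \Po - 'X = euler_umbral (Q \Po (- 'X - 1)).
Proof.
apply/eqP; rewrite -subr_eq0; apply/eqP.
exact: (shift_sums_kernel _ euler_reflect_defect_shift).
Qed.

Lemma coef_euler_poly_odd n r : odd n -> odd r -> (euler_poly n)`_r = (r == n)%:R.
Proof.
move=> n_odd r_odd; apply/eqP; rewrite -subr_eq0 -coefXn -coefB; apply/eqP.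
apply: coef_odd_eq0 => //; have := euler_umbral_reflect 'X^n.
have exprN_odd (p : {poly rat}) : (- p) ^+ n = - p ^+ n.
  by rewrite exprNn -signr_odd n_odd mulN1r.
rewrite euler_umbral_Xn comp_Xn_poly -opprD exprN_odd linearN /=.
rewrite euler_umbral_XaddC1n opprB => reflect_n.
rewrite raddfB /= reflect_n comp_Xn_poly exprN_odd opprK scaler_nat mulr2n.
by rewrite opprD addrA subrK.
Qed.

Lemma coef_euler_umbral_odd (Q : {poly rat}) r :
  Q \Po (- 'X - 1) = Q -> odd r -> (euler_umbral Q)`_r = 0.
Proof.
by move=> Q_sym; apply: coef_odd_eq0 => //; rewrite euler_umbral_reflect Q_sym.
Qed.

Lemma euler_umbral_pronicXn p : euler_umbral (('X * ('X + 1)) ^+ p) =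
  \sum_(j < p.+1) 'C(p, j)%:R *: euler_poly (p + j).
Proof.
rewrite exprMn exprD1n mulr_sumr linear_sum; apply: eq_bigr => j _.
by rewrite mulrnAr -exprD raddfMn /= euler_umbral_Xn scaler_nat.
Qed.

Lemma sum_coef_euler_poly_odd p r : odd r ->
  \sum_(j < p.+1) 'C(p, j)%:R * (euler_poly (p + j))`_r = 0.
Proof.
move=> r_odd; set pronic : {poly rat} := 'X * ('X + 1).
have pronic_sym : pronic \Po (- 'X - 1) = pronic.
  by rewrite comp_polyM comp_polyD comp_polyX comp_polyC subrK -opprD mulrNN mulrC.
have := coef_euler_umbral_odd (Q := pronic ^+ p) _ r_odd.
rewrite rmorphXn /= pronic_sym euler_umbral_pronicXn coef_sum => /(_ erefl).
move=> sum_eq0.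
by rewrite -[RHS]sum_eq0; apply: eq_bigr => j _; rewrite coefZ.
Qed.

Lemma eq_symplectic (f g : fps) : f =1 g -> symplectic f -> symplectic g.
Proof.
move=> eq_fg f_sympl m m_gt0; rewrite -[RHS](f_sympl m m_gt0).
by apply: eq_bigr => k _; rewrite eq_fg.
Qed.

Definition euler_coef_series (r : nat) : fps :=
  fun j => if j is i.+1 then (-1) ^+ i * (euler_poly i)`_r else 0.

Lemma symplectic_euler_coef_series r : odd r -> symplectic (euler_coef_series r).
Proof.
move=> r_odd [//|p] _; rewrite -[RHS](mulr0 ((-1) ^+ p)).
rewrite -[in RHS](sum_coef_euler_poly_odd p r_odd) mulr_sumr; apply: eq_bigr => j _.
have sign : (-1) ^+ j * (-1) ^+ (p + j) = (-1) ^+ p :> rat.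
  by rewrite -exprD -signr_odd addnCA oddD addnn odd_double addbF signr_odd.
by rewrite addSn /= -sign; ring.
Qed.

Lemma psi_euler_coef_series k : psi_euler k =1 euler_coef_series (2 * k).-1.
Proof.
move=> [//|i] /=; rewrite horner_coef0 coef_derivn addn0 ffactnn.
rewrite -[(euler_poly i)`_ _ *+ _]mulr_natr.
by rewrite mulrCA [_^-1 * _]mulrCA mulVf ?mulr1 // pnatr_eq0 -lt0n fact_gt0.
Qed.

Lemma odd_double_pred k : (0 < k)%N -> odd (2 * k).-1.
Proof. by case: k => // k _; rewrite mulnS /= mul2n odd_double. Qed.

Lemma bracket_coef_euler_poly a k : (0 < k)%N ->
  bracket a k = - (euler_poly (2 * a))`_(2 * k).-1.
Proof.
move=> k_gt0; rewrite /bracket coefXM muln_eq0 /= eqn0Ngt k_gt0 coefB coefXn.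
have /negPf -> : ((2 * k).-1 != 2 * a)%N.
  by apply: contraTneq (odd_double_pred k_gt0) => ->; rewrite mul2n odd_double.
by rewrite sub0r.
Qed.

Lemma psi_coef_series k : (0 < k)%N -> psi k =1 euler_coef_series (2 * k).-1.
Proof.
move=> k_gt0 [|i].
  by rewrite /psi /= eq_sym muln_eq0 /= eqn0Ngt k_gt0 subr0 oppr0.
have r_odd := odd_double_pred k_gt0; rewrite /psi /=.
have -> : (2 * k)%N = (2 * k).-1.+1 by rewrite prednK // muln_gt0.
set r := (2 * k).-1 in r_odd *.
rewrite eqSS uphalf_half -signr_odd; case: (boolP (odd i)) => [i_odd|i_even].
  rewrite subr0 coef_euler_poly_odd // mulN1r eq_sym.
  by case: (r == i); rewrite ?oppr0.
have even_i : (i./2.*2 = i)%N by rewrite -[RHS]odd_double_half (negPf i_even).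
have /negPf -> : i != r by apply: contraNneq i_even => ->.
rewrite /= oppr0 sub0r expr0 mul1r add0n; case: leqP => [le_ki|lt_ik].
  by rewrite bracket_coef_euler_poly // mul2n even_i opprK.
rewrite oppr0 coef_euler_poly_gt // -ltnS prednK ?muln_gt0 // -even_i mul2n.
by rewrite -doubleS leq_double.
Qed.

Lemma symplectic_psi0 : symplectic (psi 0).
Proof.
move=> [//|p] _; apply: big1 => j _.
by rewrite /psi /bracket muln0 coefXM /=; case: ifP; rewrite oppr0 subr0 mulr0.
Qed.

Theorem lemma5p3 (k : nat) :
  symplectic (psi k) /\ ((1 <= k)%N -> forall j : nat, psi k j = psi_euler k j).
Proof.
case: k => [|k]; first by split=> [|//]; exact: symplectic_psi0.
have psi_series := psi_coef_series (ltn0Sn k).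
split=> [|_ j]; last by rewrite psi_series psi_euler_coef_series.
apply: (@eq_symplectic (euler_coef_series (2 * k.+1).-1)) => [j|].
  by rewrite psi_series.
exact/symplectic_euler_coef_series/odd_double_pred.
Qed.
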